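(* In the setting of the context, consider a Case 1 spacetime ($\partial_v r_-=0$, so $x_-(v)\equiv0$). Then the inner AH $x=0$ consists of radially outgoing null geodesics; radially outgoing null geodesics other than those on the inner AH never intersect the inner AH; and radially outgoing null geodesics inside the inner AH ($x<0$) satisfy $x(v)\to0$ as $v\to\infty$. Consequently, an event horizon exists.
   Context: Spherically symmetric spacetime $ds^2=-f(v,r)A(v,r)^2dv^2+2A(v,r)\,dr\,dv+r^2d\Omega^2$ with $A>0$, $f,A\to1$ as $r\to\infty$, $f(v,0)=1$, $\partial_rf(v,0)=\partial_rA(v,0)=0$; $f(v,\cdot)$ has exactly two zeros $r_+(v)>r_-(v)$ (outer/inner apparent horizons, AHs), $f=F(r-r_+)(r-r_-)$ with $F>0$, and $h=AF>0$. Assumptions: $\partial_v r_+<0$; $r_\pm(v)\to r_c$ as $v\to\infty$; the sign of $\partial_v r_-$ is constant; the $v\to\infty$ limits of $A,F,h$ behave as analytic functions of $r$, so all $\partial_r^n h$ converge as $v\to\infty$. With $x=r-r_c$, $x_\pm=r_\pm-r_c$ and $h$ regarded as a function of $(v,x)$, radially outgoing null geodesics solve $dx/dv=\tfrac12h(v,x)(x-x_+(v))(x-x_-(v))$. The event horizon is the boundary of the region from which outgoing null geodesics do not reach future null infinity ($x\to\infty$). *)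

From Stdlib Require Import Reals.
From Coquelicot Require Import Coquelicot.
Open Scope R_scope.

(* Right-hand side of the radial outgoing null geodesic equation in Case 1
   (x_-(v) = 0):  dx/dv = 1/2 h(v,x) (x - x_+(v)) (x - 0). *)
Definition geod_rhs (h : R -> R -> R) (xp : R -> R) (v x : R) : R :=
  1/2 * h v x * (x - xp v) * (x - 0).

(* x is a radially outgoing null geodesic on the set I of advanced times:
   it stays in the spacetime (r >= 0, i.e. x >= -rc) and solves the ODE. *)
Definition outgoing_geod (h : R -> R -> R) (xp : R -> R) (rc : R)
  (I : R -> Prop) (x : R -> R) : Prop :=
  forall v, I v -> -rc <= x v /\ is_derive x v (geod_rhs h xp v (x v)).

Definition reaches_infinity (h : R -> R -> R) (xp : R -> R) (rc : R)
  (v0 x0 : R) : Prop :=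
  exists (b : Rbar) (x : R -> R),
    Rbar_lt v0 b /\ x v0 = x0 /\
    filterlim x (at_right v0) (locally x0) /\
    outgoing_geod h xp rc (fun v => v0 < v /\ Rbar_lt v b) x /\
    filterlim x (within (fun v => Rbar_lt v b) (Rbar_locally' b))
                (Rbar_locally p_infty).

Definition trapped_region (h : R -> R -> R) (xp : R -> R) (rc : R)
  (v0 x0 : R) : Prop :=
  -rc <= x0 /\ ~ reaches_infinity h xp rc v0 x0.

Definition event_horizon (h : R -> R -> R) (xp : R -> R) (rc : R)
  (v0 x0 : R) : Prop :=
  -rc <= x0 /\
  forall eps : R, 0 < eps ->
    (exists v1 x1, Rabs (v1 - v0) < eps /\ Rabs (x1 - x0) < eps /\
        trapped_region h xp rc v1 x1) /\
    (exists v2 x2, Rabs (v2 - v0) < eps /\ Rabs (x2 - x0) < eps /\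
        -rc <= x2 /\ ~ trapped_region h xp rc v2 x2).

(* Along an outgoing geodesic, x' = g x with g = h (x - x_+) / 2 continuous, so
   by Gronwall x vanishes identically as soon as it vanishes once: x = 0 is a
   geodesic that no other geodesic meets, and geodesics keep their sign.  A
   geodesic with x < 0 increases, and while it stays below -eps its velocity is
   bounded below because h converges locally uniformly to a positive limit;
   hence x -> 0, and every event with x < 0 is trapped.  The geodesic issued
   from (v, x) = (0, x_+(0) + 1) escapes: parametrised by w = v + x, v(w) solves
   an equation with continuous slope in (0, 1], which Perron's method solves
   globally, and x grows at least linearly in w as long as it stays bounded.
   The event horizon is the supremum of the trapped points on v = 0. *)

From Stdlib Require Import Reals Lra Psatz Ranalysis5 ClassicalEpsilon Classical.
From Coquelicot Require Import Coquelicot.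
Open Scope R_scope.

(** * Elementary real analysis *)

Lemma continuity_pt_ball (f : R -> R) (x : R) : continuity_pt f x ->
  forall e, 0 < e -> exists d, 0 < d /\
    forall y, Rabs (y - x) < d -> Rabs (f y - f x) < e.
Proof.
  intros Hf e He. destruct (Hf e He) as [d [Hd Hfd]]. exists d; split; [lra|].
  intros y Hy. destruct (Req_dec y x) as [->|Hyx].
  - rewrite Rminus_eq_0, Rabs_R0; exact He.
  - apply (Hfd y). split; [split; [exact I|auto]|exact Hy].
Qed.

Lemma continuity_pt_of_ball (f : R -> R) (x : R) :
  (forall e, 0 < e -> exists d, 0 < d /\
     forall y, Rabs (y - x) < d -> Rabs (f y - f x) < e) ->
  continuity_pt f x.
Proof.
  intros Hf e He. destruct (Hf e He) as [d [Hd Hfd]]. exists d; split; [lra|].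
  intros y [_ Hy]. exact (Hfd y Hy).
Qed.

Lemma is_derive_continuity_pt (f : R -> R) (x l : R) : is_derive f x l -> continuity_pt f x.
Proof.
  intros Hf. apply continuity_pt_filterlim, (ex_derive_continuous f x). exists l; exact Hf.
Qed.

Lemma continuity_pt_lipschitz (f : R -> R) (x L : R) :
  (forall y, Rabs (f y - f x) <= L * Rabs (y - x)) -> continuity_pt f x.
Proof.
  intros Hf. apply continuity_pt_of_ball. intros e He.
  assert (HL : 0 < Rabs L + 1) by (pose proof (Rabs_pos L); lra).
  exists (e / (Rabs L + 1)); split; [apply Rdiv_lt_0_compat; lra|].
  intros y Hy. eapply Rle_lt_trans; [apply Hf|].
  assert (Hyx : Rabs L * Rabs (y - x) <= Rabs L * (e / (Rabs L + 1)))
    by (apply Rmult_le_compat_l; [apply Rabs_pos|lra]).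
  assert (e / (Rabs L + 1) * (Rabs L + 1) = e) by (field; lra).
  pose proof (Rle_abs L). pose proof (Rabs_pos (y - x)). nra.
Qed.

Lemma continuity_pt_pos_locally (f : R -> R) (x : R) : continuity_pt f x -> 0 < f x ->
  exists d, 0 < d /\ forall y, Rabs (y - x) < d -> 0 < f y.
Proof.
  intros Hf Hx. destruct (continuity_pt_ball f x Hf (f x) Hx) as [d [Hd Hfd]].
  exists d; split; [exact Hd|]. intros y Hy.
  specialize (Hfd y Hy). apply Rabs_def2 in Hfd. lra.
Qed.

Lemma continuity_pt_comp_2d (f : R -> R -> R) (p q : R -> R) (x : R) :
  continuity_2d_pt f (p x) (q x) -> continuity_pt p x -> continuity_pt q x ->
  continuity_pt (fun y => f (p y) (q y)) x.
Proof.
  intros Hf Hp Hq. apply continuity_pt_of_ball. intros e He.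
  destruct (Hf (mkposreal e He)) as [d Hd].
  destruct (continuity_pt_ball p x Hp d (cond_pos d)) as [d1 [Hd1 Hp1]].
  destruct (continuity_pt_ball q x Hq d (cond_pos d)) as [d2 [Hd2 Hq2]].
  exists (Rmin d1 d2); split; [apply Rmin_glb_lt; auto|].
  intros y Hy. apply Hd.
  - apply Hp1. eapply Rlt_le_trans; [exact Hy|apply Rmin_l].
  - apply Hq2. eapply Rlt_le_trans; [exact Hy|apply Rmin_r].
Qed.

Lemma continuity_2d_pt_comp (f p q : R -> R -> R) a b :
  continuity_2d_pt f (p a b) (q a b) ->
  continuity_2d_pt p a b -> continuity_2d_pt q a b ->
  continuity_2d_pt (fun u v => f (p u v) (q u v)) a b.
Proof.
  intros Hf Hp Hq e. destruct (Hf e) as [d Hd].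
  destruct (Hp d) as [d1 Hd1]. destruct (Hq d) as [d2 Hd2].
  assert (H12 : 0 < Rmin d1 d2) by (apply Rmin_glb_lt; apply cond_pos).
  exists (mkposreal _ H12). simpl. intros u v Hu Hv.
  assert (Rmin d1 d2 <= d1) by apply Rmin_l. assert (Rmin d1 d2 <= d2) by apply Rmin_r.
  apply Hd; [apply Hd1|apply Hd2]; lra.
Qed.

Lemma Rabs_Rmax_sub a b c : Rabs (Rmax a c - Rmax b c) <= Rabs (a - b).
Proof. unfold Rmax, Rabs; repeat destruct Rle_dec; repeat destruct Rcase_abs; lra. Qed.

Lemma Rabs_Rmin_sub a b c : Rabs (Rmin a c - Rmin b c) <= Rabs (a - b).
Proof. unfold Rmin, Rabs; repeat destruct Rle_dec; repeat destruct Rcase_abs; lra. Qed.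

Lemma continuity_pt_Rmax_r c x : continuity_pt (fun y => Rmax y c) x.
Proof.
  apply (continuity_pt_lipschitz _ _ 1). intros y. rewrite Rmult_1_l. apply Rabs_Rmax_sub.
Qed.

Lemma continuity_pt_Rmin_r c x : continuity_pt (fun y => Rmin y c) x.
Proof.
  apply (continuity_pt_lipschitz _ _ 1). intros y. rewrite Rmult_1_l. apply Rabs_Rmin_sub.
Qed.

Lemma increment_ge_of_derive_ge (f df : R -> R) (p q c : R) : p <= q ->
  (forall u, p <= u <= q -> is_derive f u (df u) /\ c <= df u) ->
  c * (q - p) <= f q - f p.
Proof.
  intros Hpq Hd.
  destruct (MVT_gen f p q df) as [u [Hu ->]];
    rewrite ?Rmin_left, ?Rmax_right in * by lra.
  - intros u Hu. apply Hd; lra.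
  - intros u Hu. apply (is_derive_continuity_pt _ _ (df u)), Hd; lra.
  - apply Rmult_le_compat_r; [lra|]. apply Hd; lra.
Qed.

Lemma increment_le_of_derive_le (f df : R -> R) (p q c : R) : p <= q ->
  (forall u, p <= u <= q -> is_derive f u (df u) /\ df u <= c) ->
  f q - f p <= c * (q - p).
Proof.
  intros Hpq Hd.
  assert (H := increment_ge_of_derive_ge (fun u => - f u) (fun u => - df u) p q (- c) Hpq).
  enough (- c * (q - p) <= - f q - - f p) by lra. apply H.
  intros u Hu. destruct (Hd u Hu) as [Hf Hc]. split; [|lra].
  exact (is_derive_opp f u (df u) Hf).
Qed.

Lemma unbounded_of_derive_ge (f df : R -> R) (v1 c : R) : 0 < c ->
  (forall u, v1 <= u -> is_derive f u (df u) /\ c <= df u) ->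
  forall B, exists u, v1 <= u /\ B < f u.
Proof.
  intros Hc Hd B. set (T := Rabs (B - f v1) / c + 1).
  assert (HcT : c * T = Rabs (B - f v1) + c) by (unfold T; field; lra).
  assert (HT : 0 < T) by (pose proof (Rabs_pos (B - f v1)); nra).
  exists (v1 + T). split; [lra|].
  assert (Hinc := increment_ge_of_derive_ge f df v1 (v1 + T) c ltac:(lra)
    (fun u Hu => Hd u ltac:(lra))).
  replace (v1 + T - v1) with T in Hinc by ring.
  pose proof (Rle_abs (B - f v1)). lra.
Qed.

Lemma IVT_interval (x : R -> R) (p q : R) : p <= q ->
  (forall u, p <= u <= q -> continuity_pt x u) -> x p * x q <= 0 ->
  exists z, p <= z <= q /\ x z = 0.
Proof.
  intros Hpq Hc Hs.
  set (clamp := fun u => Rmin (Rmax u p) q).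
  assert (Hclamp : forall u, p <= clamp u <= q)
    by (intros u; unfold clamp, Rmin, Rmax; repeat destruct Rle_dec; lra).
  assert (Hid : forall u, p <= u <= q -> clamp u = u)
    by (intros u Hu; unfold clamp; rewrite Rmax_left, Rmin_left; lra).
  assert (Hcont : continuity (fun u => x (clamp u))).
  { intros u. apply (continuity_pt_comp clamp x u); [|apply Hc, Hclamp].
    apply (continuity_pt_comp (fun u => Rmax u p) (fun y => Rmin y q));
      [apply continuity_pt_Rmax_r|apply continuity_pt_Rmin_r]. }
  destruct (IVT_cor _ p q Hcont Hpq) as [z [Hz Hxz]].
  - rewrite !Hid by lra. exact Hs.
  - exists z. rewrite Hid in Hxz by lra. auto.
Qed.

(* Gronwall: [x^2 exp(-2 M u)] is nonincreasing when [M] bounds [|g|]. *)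
Lemma linear_ode_zero_forward (x g : R -> R) (p q : R) : p <= q ->
  (forall u, p <= u <= q -> is_derive x u (g u * x u) /\ continuity_pt g u) ->
  x p = 0 -> x q = 0.
Proof.
  intros Hpq Hx Hp.
  destruct (continuity_ab_maj (fun u => Rabs (g u)) p q Hpq) as [m [HM _]].
  { intros u Hu. apply (continuity_pt_comp g Rabs); [apply Hx, Hu|apply Rcontinuity_abs]. }
  set (M := Rabs (g m)).
  set (z := fun u => x u * x u * exp (- 2 * M * u)).
  set (dz := fun u => 2 * (x u * x u * exp (- 2 * M * u)) * (g u - M)).
  assert (Hz : z q - z p <= 0 * (q - p)).
  { apply (increment_le_of_derive_le z dz); [exact Hpq|]. intros u Hu.
    destruct (Hx u Hu) as [Hxu _]. split.
    - unfold z. auto_derive.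
      + repeat split; exists (g u * x u); exact Hxu.
      + replace (Derive (fun y => x y) u) with (g u * x u)
          by (symmetry; apply is_derive_unique; exact Hxu).
        unfold dz. ring.
    - unfold dz. specialize (HM u Hu). pose proof (Rle_abs (g u)).
      assert (HA : 0 <= x u * x u * exp (- 2 * M * u))
        by (apply Rmult_le_pos; [nra|apply Rlt_le, exp_pos]).
      assert (Hg : g u - M <= 0) by (unfold M in *; lra).
      clear - HA Hg. nra. }
  unfold z in Hz. rewrite Hp in Hz. pose proof (exp_pos (- 2 * M * q)).
  assert (x q * x q * exp (- 2 * M * q) <= 0) by lra.
  assert (x q * x q <= 0) by (apply (Rmult_le_reg_r (exp (- 2 * M * q))); lra). nra.
Qed.

Lemma linear_ode_zero_backward (x g : R -> R) (p q : R) : p <= q ->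
  (forall u, p <= u <= q -> is_derive x u (g u * x u) /\ continuity_pt g u) ->
  x q = 0 -> x p = 0.
Proof.
  intros Hpq Hx Hq.
  assert (Hrev := linear_ode_zero_forward (fun u => x (- u)) (fun u => - g (- u))
                    (- q) (- p) ltac:(lra)).
  cbv beta in Hrev. rewrite !Ropp_involutive in Hrev. apply Hrev; [|exact Hq].
  intros u Hu. destruct (Hx (- u) ltac:(lra)) as [Hxu Hgu]. split.
  - assert (Hc := is_derive_comp x Ropp u _ _ Hxu (is_derive_opp _ u _ (is_derive_id u))).
    simpl in Hc. unfold scal, mult, opp, one in Hc; simpl in Hc.
    replace (- g (- u) * x (- u)) with (- (1) * (g (- u) * x (- u))) by ring. exact Hc.
  - apply continuity_pt_opp, (continuity_pt_comp Ropp g); [reg|exact Hgu].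
Qed.

Lemma is_derive_inverse (f g df : R -> R) (lo lb ub v : R) :
  lb < v < ub -> f lo < lb ->
  (forall p q, lo <= p -> p < q -> f p < f q) ->
  (forall w, lo < w -> is_derive f w (df w)) ->
  (forall u, lb <= u <= ub -> lo <= g u /\ f (g u) = u) ->
  df (g v) <> 0 ->
  is_derive g v (/ df (g v)).
Proof.
  intros Hv Hlo Hf Hdf Hg Hdf0.
  assert (Hg_gt : forall u, lb <= u <= ub -> lo < g u).
  { intros u Hu. destruct (Hg u Hu) as [[Hlt|Heq] Hfg]; [exact Hlt|].
    rewrite <- Heq in Hfg. lra. }
  assert (Hg_incr : forall u1 u2, lb <= u1 -> u1 < u2 -> u2 <= ub -> g u1 < g u2).
  { intros u1 u2 H1 H12 H2. destruct (Rlt_le_dec (g u1) (g u2)) as [|Hle]; [auto|].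
    destruct (Hg u1 ltac:(lra)) as [_ Hf1]. destruct (Hg u2 ltac:(lra)) as [Hlo2 Hf2].
    destruct Hle as [Hlt|Heq].
    - pose proof (Hf _ _ Hlo2 Hlt). lra.
    - rewrite Heq in Hf2. lra. }
  assert (Hg_le : forall u1 u2, lb <= u1 -> u1 <= u2 -> u2 <= ub -> g u1 <= g u2).
  { intros u1 u2 H1 H12 H2. destruct H12 as [Hlt|<-]; [left; apply Hg_incr|right]; auto. }
  assert (Hfg : forall u, lb <= u <= ub -> comp f g u = id u)
    by (intros u Hu; apply Hg, Hu).
  assert (Hflb : f (g lb) = lb) by (apply Hg; lra).
  assert (Hfub : f (g ub) = ub) by (apply Hg; lra).
  assert (Hgv : g lb <= g v <= g ub) by (split; apply Hg_le; lra).
  pose (Prf := fun a (Ha : g lb <= a <= g ub) =>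
    exist (fun l => derivable_pt_lim f a l) (df a)
      (proj1 (is_derive_Reals f a (df a)) (Hdf a ltac:(pose proof (Hg_gt lb ltac:(lra)); lra)))).
  assert (Hcont : continuity_pt g v).
  { apply (continuity_pt_recip_interv f g (g lb) (g ub)).
    - apply Hg_incr; lra.
    - intros p q Hp Hpq _. apply Hf; [|exact Hpq]. pose proof (Hg_gt lb ltac:(lra)). lra.
    - rewrite Hflb, Hfub. intros u H1 H2. apply Hfg. lra.
    - rewrite Hflb, Hfub. intros u H1 H2. split; apply Hg_le; lra.
    - intros a Ha. apply (is_derive_continuity_pt f a (df a)), Hdf.
      pose proof (Hg_gt lb ltac:(lra)). lra.
    - rewrite Hflb, Hfub. exact Hv. }
  assert (Hder : derive_pt f (g v) (Prf (g v) Hgv) = df (g v))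
    by (apply derive_pt_eq_0, is_derive_Reals, Hdf, Hg_gt; lra).
  apply is_derive_Reals. rewrite <- Hder, <- (Rmult_1_l (/ _)).
  apply (derivable_pt_lim_recip_interv f g lb ub v Prf Hcont); [lra|lra| |].
  - intros u Hu. apply Hfg, Hu.
  - rewrite Hder. exact Hdf0.
Qed.

Lemma Rbar_lt_between (a : R) (b : Rbar) (p q u : R) :
  a < p -> Rbar_lt q b -> p <= u <= q -> a < u /\ Rbar_lt u b.
Proof.
  intros Hp Hq Hu. split; [lra|]. destruct b as [b| |]; simpl in *; [lra|exact I|contradiction].
Qed.

Lemma at_right_witness (v1 : R) (b : Rbar) (P : R -> Prop) :
  Rbar_lt v1 b -> at_right v1 P -> exists u, v1 < u /\ Rbar_lt u b /\ P u.
Proof.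
  intros Hb [eps Heps]. pose proof (cond_pos eps).
  assert (Hu : exists u, v1 < u < v1 + eps /\ Rbar_lt u b).
  { destruct b as [b| |]; simpl in Hb;
      [|exists (v1 + eps / 2); simpl; split; [lra|exact I]|contradiction].
    exists (v1 + Rmin eps (b - v1) / 2).
    assert (Rmin eps (b - v1) <= eps) by apply Rmin_l.
    assert (Rmin eps (b - v1) <= b - v1) by apply Rmin_r.
    assert (0 < Rmin eps (b - v1)) by (apply Rmin_glb_lt; lra). simpl. lra. }
  destruct Hu as [u [Hu Hub]]. exists u. split; [lra|]. split; [exact Hub|].
  apply Heps; [|lra]. change (Rabs (u - v1) < eps). apply Rabs_lt_between. lra.
Qed.

Lemma at_left_witness (b : Rbar) (u : R) (x : R -> R) : Rbar_lt u b ->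
  filterlim x (within (fun v => Rbar_lt v b) (Rbar_locally' b)) (Rbar_locally p_infty) ->
  exists v, u < v /\ Rbar_lt v b /\ 0 < x v.
Proof.
  intros Hub Hlim. assert (Hnear := Hlim (fun y => 0 < y) ltac:(exists 0; auto)).
  destruct b as [b| |]; simpl in Hub; [|destruct Hnear as [M HM]|contradiction].
  - destruct Hnear as [e He]. pose proof (cond_pos e).
    set (v := (Rmax u (b - e / 2) + b) / 2).
    assert (Rmax u (b - e / 2) < b) by (apply Rmax_lub_lt; lra).
    assert (u <= Rmax u (b - e / 2)) by apply Rmax_l.
    assert (b - e / 2 <= Rmax u (b - e / 2)) by apply Rmax_r.
    exists v. split; [unfold v; lra|]. split; [simpl; unfold v; lra|].
    apply He; [|unfold v; lra|simpl; unfold v; lra].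
    change (Rabs (v - b) < e). apply Rabs_lt_between. unfold v. lra.
  - exists (Rmax M u + 1). pose proof (Rmax_l M u). pose proof (Rmax_r M u).
    split; [lra|]. split; [exact I|]. apply HM; [lra|exact I].
Qed.

Lemma filterlim_at_left_pinfty (b : Rbar) (x : R -> R) :
  (forall M, exists c : R, Rbar_lt c b /\ forall v, c < v -> Rbar_lt v b -> M < x v) ->
  filterlim x (within (fun v => Rbar_lt v b) (Rbar_locally' b)) (Rbar_locally p_infty).
Proof.
  intros Hx P [M HM]. destruct (Hx M) as [c [Hc Hcx]].
  destruct b as [b| |]; simpl in Hc.
  - exists (mkposreal (b - c) ltac:(lra)). intros v Hv _ Hvb.
    change (Rabs (v - b) < b - c) in Hv. apply Rabs_lt_between in Hv.
    apply HM, Hcx; [simpl; lra|exact Hvb].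
  - exists c. intros v Hv Hvb. apply HM, Hcx; [exact Hv|exact Hvb].
  - contradiction.
Qed.

Lemma sup_is_boundary (T : R -> Prop) lo hi : lo <= hi -> T lo -> ~ T hi ->
  exists s, lo <= s <= hi /\ forall eps, 0 < eps ->
    (exists x, Rabs (x - s) < eps /\ lo <= x <= hi /\ T x) /\
    (exists x, Rabs (x - s) < eps /\ lo <= x <= hi /\ ~ T x).
Proof.
  intros Hlh Hlo Hhi. set (E := fun x => lo <= x <= hi /\ T x).
  destruct (completeness E) as [s [Hub Hlub]].
  { exists hi. intros x [Hx _]. lra. }
  { exists lo. split; [lra|exact Hlo]. }
  assert (Hs : lo <= s <= hi).
  { split; [apply Hub; split; [lra|exact Hlo]|apply Hlub; intros x [Hx _]; lra]. }
  exists s. split; [exact Hs|]. intros eps Heps. split.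
  - apply NNPP. intros Hn. enough (s <= s - eps) by lra. apply Hlub.
    intros x [Hx HTx]. apply Rnot_lt_le. intros Hlt.
    assert (x <= s) by (apply Hub; split; assumption).
    apply Hn. exists x. split; [apply Rabs_lt_between; lra|auto].
  - destruct (Req_dec s hi) as [->|Hne].
    + exists hi. rewrite Rminus_eq_0, Rabs_R0. auto.
    + set (x := Rmin (s + eps / 2) hi).
      assert (x <= s + eps / 2) by apply Rmin_l. assert (x <= hi) by apply Rmin_r.
      assert (s < x) by (apply Rmin_glb_lt; lra).
      exists x. split; [apply Rabs_lt_between; lra|]. split; [lra|].
      intros HTx. assert (x <= s) by (apply Hub; split; [lra|exact HTx]). lra.
Qed.

(** * Comparison with lines and Perron's method *)

Lemma real_induction (P : R -> Prop) a b : a <= b ->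
  (forall s, a <= s <= b -> (forall u, a <= u < s -> P u) -> P s) ->
  (forall s, a <= s < b -> (forall u, a <= u <= s -> P u) ->
     exists d, 0 < d /\ forall u, s < u < s + d -> P u) ->
  forall u, a <= u <= b -> P u.
Proof.
  intros Hab Hclosed Hopen.
  set (E := fun s => a <= s <= b /\ forall u, a <= u <= s -> P u).
  assert (Ea : E a).
  { split; [lra|]. intros u Hu. replace u with a by lra.
    apply Hclosed; [lra|]. intros; lra. }
  destruct (completeness E) as [c [Hub Hlub]].
  { exists b. intros s [Hs _]. lra. }
  { exists a. exact Ea. }
  assert (Hac : a <= c) by (apply Hub; exact Ea).
  assert (Hcb : c <= b) by (apply Hlub; intros s [Hs _]; lra).
  assert (Hupto : forall u, a <= u <= c -> P u).
  { assert (Hbelow : forall u, a <= u < c -> P u).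
    { intros u Hu. destruct (classic (exists s, E s /\ u < s)) as [[s [[_ Hs] Hus]]|Hn].
      - apply Hs; lra.
      - enough (c <= u) by lra. apply Hlub. intros s Es.
        destruct (Rle_lt_dec s u) as [|Hus]; [auto|]. exfalso. eauto. }
    intros u Hu. destruct (Req_dec u c) as [->|]; [|apply Hbelow; lra].
    apply Hclosed; [lra|exact Hbelow]. }
  destruct (Req_dec c b) as [<-|Hcb'].
  - exact Hupto.
  - exfalso. destruct (Hopen c ltac:(lra) Hupto) as [d [Hd Hext]].
    set (s := c + Rmin d (b - c) / 2).
    assert (0 < Rmin d (b - c)) by (apply Rmin_glb_lt; lra).
    assert (Rmin d (b - c) <= d) by apply Rmin_l.
    assert (Rmin d (b - c) <= b - c) by apply Rmin_r.
    assert (E s).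
    { split; [unfold s; lra|]. intros u Hu.
      destruct (Rle_lt_dec u c); [apply Hupto; lra|]. apply Hext. unfold s in Hu. lra. }
    assert (s <= c) by (apply Hub; auto). unfold s in *. lra.
Qed.

Definition upper_dini_le (phi : R -> R) (K s : R) : Prop :=
  forall e, 0 < e -> exists d, 0 < d /\
    forall k, 0 < k < d -> phi (s + k) - phi s <= (K + e) * k.

Lemma le_line_of_upper_dini_eps phi a b A0 K ep : 0 < ep -> a <= b ->
  (forall w, continuity_pt phi w) -> phi a <= A0 ->
  (forall s, a <= s < b -> A0 + K * (s - a) <= phi s -> upper_dini_le phi K s) ->
  phi b <= A0 + (K + ep) * (b - a) + ep.
Proof.
  intros Hep Hab Hphi Ha Hdini.
  set (L := fun u => A0 + (K + ep) * (u - a) + ep).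
  assert (HL : forall s, continuity_pt (fun u => L u - phi u) s).
  { intros s. apply (continuity_pt_minus L phi); [unfold L; reg|apply Hphi]. }
  assert (HL' : forall s, continuity_pt (fun u => phi u - L u) s).
  { intros s. apply (continuity_pt_minus phi L); [apply Hphi|unfold L; reg]. }
  apply (real_induction (fun u => phi u <= L u) a b); [exact Hab| | |lra].
  - intros s Hs Hbelow. destruct (Rle_lt_dec (phi s) (L s)) as [|Hgt]; [auto|exfalso].
    destruct (Req_dec s a) as [->|Hsa]; [unfold L in Hgt; lra|].
    destruct (continuity_pt_pos_locally _ s (HL' s) ltac:(lra)) as [d [Hd Hpos]].
    set (u := Rmax a (s - d / 2)).
    assert (a <= u) by apply Rmax_l. assert (s - d / 2 <= u) by apply Rmax_r.
    assert (u < s) by (apply Rmax_lub_lt; lra).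
    specialize (Hpos u ltac:(rewrite Rabs_left; lra)). specialize (Hbelow u ltac:(lra)). lra.
  - intros s Hs Hupto. assert (Hs' := Hupto s ltac:(lra)).
    destruct (Rlt_le_dec (phi s) (L s)) as [Hlt|Hge].
    + destruct (continuity_pt_pos_locally _ s (HL s) ltac:(lra)) as [d [Hd Hpos]].
      exists d; split; [exact Hd|]. intros u Hu.
      specialize (Hpos u ltac:(rewrite Rabs_pos_eq; lra)). lra.
    + assert (Hon : A0 + K * (s - a) <= phi s) by (unfold L in *; nra).
      destruct (Hdini s Hs Hon ep Hep) as [d [Hd Hk]].
      exists d; split; [exact Hd|]. intros u Hu.
      specialize (Hk (u - s) ltac:(lra)). replace (s + (u - s)) with u in Hk by ring.
      unfold L in *. lra.
Qed.

Lemma le_line_of_upper_dini phi a b A0 K : a <= b ->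
  (forall w, continuity_pt phi w) -> phi a <= A0 ->
  (forall s, a <= s < b -> A0 + K * (s - a) <= phi s -> upper_dini_le phi K s) ->
  phi b <= A0 + K * (b - a).
Proof.
  intros Hab Hphi Ha Hdini. apply Rle_plus_epsilon. intros eps Heps.
  set (ep := eps / (b - a + 1)).
  assert (Hep : 0 < ep) by (apply Rdiv_lt_0_compat; lra).
  assert (ep * (b - a + 1) = eps) by (unfold ep; field; lra).
  pose proof (le_line_of_upper_dini_eps phi a b A0 K ep Hep Hab Hphi Ha Hdini). nra.
Qed.

Lemma is_derive_of_increments (f : R -> R) (t c : R) :
  (forall ep, 0 < ep -> exists k0, 0 < k0 /\ forall k, 0 < k < k0 ->
     Rabs (f (t + k) - f t - c * k) <= ep * k /\
     Rabs (f t - f (t - k) - c * k) <= ep * k) ->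
  is_derive f t c.
Proof.
  intros Hinc. apply is_derive_Reals. intros eps Heps.
  destruct (Hinc (eps / 2) ltac:(lra)) as [k0 [Hk0 Hk]].
  exists (mkposreal k0 Hk0). intros k Hk_ne Hk_lt. simpl in Hk_lt.
  assert (Hr : Rabs (f (t + k) - f t - c * k) <= eps / 2 * Rabs k).
  { destruct (Rlt_le_dec 0 k) as [Hpos|Hneg].
    - rewrite (Rabs_pos_eq k) in * by lra. apply Hk. lra.
    - assert (Hk_neg : k < 0) by (destruct Hneg; [auto|contradiction]).
      rewrite (Rabs_left k) in * by lra. destruct (Hk (- k) ltac:(lra)) as [_ Hleft].
      replace (t - - k) with (t + k) in Hleft by ring.
      rewrite <- Rabs_Ropp. replace (- (f (t + k) - f t - c * k))
        with (f t - f (t + k) - c * - k) by ring. exact Hleft. }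
  assert (Habs : 0 < Rabs k) by (apply Rabs_pos_lt; exact Hk_ne).
  replace ((f (t + k) - f t) / k - c) with ((f (t + k) - f t - c * k) / k)
    by (field; exact Hk_ne).
  rewrite Rabs_div by exact Hk_ne. apply Rle_lt_trans with (eps / 2); [|lra].
  unfold Rdiv. apply (Rmult_le_reg_r (Rabs k)); [exact Habs|].
  rewrite Rmult_assoc, Rinv_l, Rmult_1_r by lra. exact Hr.
Qed.

Section Perron.

Variable H : R -> R -> R.
Hypothesis H_pos : forall s z, 0 < H s z.
Hypothesis H_le_1 : forall s z, H s z <= 1.
Hypothesis H_cont : forall s z, continuity_2d_pt H s z.
Variables w0 y0 : R.

Definition subsolution (phi : R -> R) : Prop :=
  (forall w, continuity_pt phi w) /\ phi w0 <= y0 /\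
  forall s, w0 <= s -> upper_dini_le phi (H s (phi s)) s.

Lemma subsolution_lipschitz phi a b : subsolution phi -> w0 <= a <= b ->
  phi b <= phi a + (b - a).
Proof.
  intros [Hc [_ Hd]] Hab. rewrite <- (Rmult_1_l (b - a)).
  apply le_line_of_upper_dini; [lra|exact Hc|lra|]. intros s Hs _ e He.
  destruct (Hd s ltac:(lra) e He) as [d [Hd0 Hk]]. exists d; split; [exact Hd0|].
  intros k Hk'. specialize (Hk k Hk'). specialize (H_le_1 s (phi s)). nra.
Qed.

Lemma subsolution_const : subsolution (fun _ => y0).
Proof.
  split; [|split; [lra|]].
  - intros w. apply continuity_pt_const. intros u v. reflexivity.
  - intros s _ e He. exists 1; split; [lra|]. intros k Hk.
    specialize (H_pos s y0). nra.
Qed.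

Definition glue (phi : R -> R) (t sg dl : R) (u : R) : R :=
  phi (Rmin u t) + sg * Rmin (Rmax (u - t) 0) dl.

Lemma glue_left phi t sg dl u : 0 <= dl -> u <= t -> glue phi t sg dl u = phi u.
Proof.
  intros Hdl Hu. unfold glue. rewrite Rmin_left, Rmax_right, Rmin_left by lra. ring.
Qed.

Lemma glue_segment phi t sg dl u : t <= u <= t + dl ->
  glue phi t sg dl u = phi t + sg * (u - t).
Proof.
  intros Hu. unfold glue. rewrite Rmin_right, Rmax_left, Rmin_left by lra. reflexivity.
Qed.

Lemma glue_right phi t sg dl u : 0 <= dl -> t + dl <= u ->
  glue phi t sg dl u = phi t + sg * dl.
Proof.
  intros Hdl Hu. unfold glue. rewrite Rmin_right, Rmax_left, Rmin_right by lra. reflexivity.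
Qed.

Lemma glue_continuity phi t sg dl : (forall w, continuity_pt phi w) ->
  forall w, continuity_pt (glue phi t sg dl) w.
Proof.
  intros Hphi w. apply continuity_pt_plus.
  - apply (continuity_pt_comp (fun u => Rmin u t) phi);
      [apply continuity_pt_Rmin_r|apply Hphi].
  - apply (continuity_pt_lipschitz _ _ (Rabs sg)). intros y.
    rewrite <- Rmult_minus_distr_l, Rabs_mult.
    apply Rmult_le_compat_l; [apply Rabs_pos|].
    eapply Rle_trans; [apply Rabs_Rmin_sub|].
    eapply Rle_trans; [apply Rabs_Rmax_sub|]. right. f_equal. ring.
Qed.

Lemma subsolution_glue phi t sg dl : subsolution phi -> w0 <= t -> 0 < dl ->
  (forall s, t <= s < t + dl -> sg < H s (phi t + sg * (s - t))) ->
  subsolution (glue phi t sg dl).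
Proof.
  intros [Hc [H0 Hd]] Ht Hdl Hslope. split; [|split].
  - apply glue_continuity, Hc.
  - rewrite glue_left by lra. exact H0.
  - intros s Hs e He. destruct (Rlt_le_dec s t) as [Hst|Hts].
    + destruct (Hd s Hs e He) as [d [Hd0 Hk]].
      exists (Rmin d (t - s)); split; [apply Rmin_glb_lt; lra|].
      intros k Hk'. assert (Rmin d (t - s) <= d) by apply Rmin_l.
      assert (Rmin d (t - s) <= t - s) by apply Rmin_r.
      rewrite !glue_left by lra. apply Hk. lra.
    + destruct (Rlt_le_dec s (t + dl)) as [Hsd|Hsd].
      * exists (t + dl - s); split; [lra|]. intros k Hk.
        rewrite !glue_segment by lra. specialize (Hslope s ltac:(lra)). nra.
      * exists 1; split; [lra|]. intros k Hk.
        rewrite !glue_right by lra. specialize (H_pos s (phi t + sg * dl)). nra.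
Qed.

(* Perron's solution: the supremum of all subsolutions, frozen at its value
   at [w0] for [w <= w0]. *)
Definition Y (w : R) : R := epsilon (inhabits 0)
  (is_lub (fun z => exists phi, subsolution phi /\ z = phi (Rmax w w0))).

Lemma Y_is_lub w : is_lub (fun z => exists phi, subsolution phi /\ z = phi (Rmax w w0)) (Y w).
Proof.
  unfold Y. apply epsilon_spec.
  assert (Hbound : bound (fun z => exists phi, subsolution phi /\ z = phi (Rmax w w0))).
  { exists (y0 + (Rmax w w0 - w0)). intros z [phi [Hphi ->]].
    assert (Hm : w0 <= Rmax w w0) by apply Rmax_r.
    pose proof (subsolution_lipschitz phi w0 (Rmax w w0) Hphi ltac:(lra)).
    destruct Hphi as [_ [Hphi _]]. lra. }
  destruct (completeness _ Hbound) as [m Hm].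
  - exists y0, (fun _ => y0). split; [exact subsolution_const|reflexivity].
  - exists m. exact Hm.
Qed.

Lemma subsolution_le_Y phi w : subsolution phi -> w0 <= w -> phi w <= Y w.
Proof.
  intros Hphi Hw. apply (Y_is_lub w). exists phi. rewrite Rmax_left by lra. auto.
Qed.

Lemma Y_le w B : w0 <= w -> (forall phi, subsolution phi -> phi w <= B) -> Y w <= B.
Proof.
  intros Hw HB. apply (Y_is_lub w). intros z [phi [Hphi ->]].
  rewrite Rmax_left by lra. auto.
Qed.

Lemma Y_approx w eta : w0 <= w -> 0 < eta -> exists phi, subsolution phi /\ Y w - eta < phi w.
Proof.
  intros Hw Heta. apply NNPP. intros Hn.
  enough (Y w <= Y w - eta) by lra. apply Y_le; [exact Hw|].
  intros phi Hphi. apply Rnot_lt_le. intros Hlt. apply Hn. eauto.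
Qed.

Lemma Y_w0 : Y w0 = y0.
Proof.
  apply Rle_antisym.
  - apply Y_le; [lra|]. intros phi [_ [Hphi _]]. exact Hphi.
  - apply (subsolution_le_Y (fun _ => y0)); [apply subsolution_const|lra].
Qed.

Lemma Y_before_w0 w : w <= w0 -> Y w = Y w0.
Proof. intros Hw. unfold Y. rewrite Rmax_right, Rmax_left by lra. reflexivity. Qed.

Lemma Y_incr_from_w0 a b : w0 <= a <= b -> Y a <= Y b.
Proof.
  intros Hab. apply Rle_plus_epsilon. intros eta Heta.
  destruct (Y_approx a eta ltac:(lra) Heta) as [phi [Hphi Happrox]].
  assert (Hglue : subsolution (glue phi a 0 1))
    by (apply subsolution_glue; [exact Hphi|lra|lra|intros s _; apply H_pos]).
  assert (Hb := subsolution_le_Y _ b Hglue ltac:(lra)).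
  destruct (Rle_lt_dec b (a + 1)).
  - rewrite glue_segment in Hb by lra. lra.
  - rewrite glue_right in Hb by lra. lra.
Qed.

Lemma Y_lipschitz_from_w0 a b : w0 <= a <= b -> Y b <= Y a + (b - a).
Proof.
  intros Hab. apply Y_le; [lra|]. intros phi Hphi.
  pose proof (subsolution_lipschitz phi a b Hphi Hab).
  pose proof (subsolution_le_Y phi a Hphi ltac:(lra)). lra.
Qed.

Lemma Y_incr a b : a <= b -> Y a <= Y b.
Proof.
  intros Hab. destruct (Rle_dec a w0).
  - rewrite (Y_before_w0 a) by lra. destruct (Rle_dec b w0).
    + rewrite (Y_before_w0 b) by lra. lra.
    + apply Y_incr_from_w0. lra.
  - apply Y_incr_from_w0. lra.
Qed.

Lemma Y_lipschitz a b : a <= b -> Y b <= Y a + (b - a).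
Proof.
  intros Hab. destruct (Rle_dec b w0).
  - rewrite (Y_before_w0 a), (Y_before_w0 b) by lra. lra.
  - destruct (Rle_dec a w0).
    + rewrite (Y_before_w0 a) by lra. pose proof (Y_lipschitz_from_w0 w0 b ltac:(lra)). lra.
    + apply Y_lipschitz_from_w0. lra.
Qed.

Lemma Y_continuity w : continuity_pt Y w.
Proof.
  apply (continuity_pt_lipschitz _ _ 1). intros y. rewrite Rmult_1_l.
  destruct (Rle_dec y w).
  - pose proof (Y_incr y w ltac:(lra)). pose proof (Y_lipschitz y w ltac:(lra)).
    rewrite !Rabs_left1 by lra. lra.
  - pose proof (Y_incr w y ltac:(lra)). pose proof (Y_lipschitz w y ltac:(lra)).
    rewrite !Rabs_pos_eq by lra. lra.
Qed.

Lemma Y_increment_le t k K : w0 <= t -> 0 < k -> 0 <= K ->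
  (forall s z, t <= s <= t + k -> Rabs (z - Y t) <= k -> H s z <= K) ->
  Y (t + k) <= Y t + K * k.
Proof.
  intros Ht Hk HK Hbox. apply Y_le; [lra|]. intros phi Hphi.
  replace k with (t + k - t) at 2 by ring.
  pose proof Hphi as [Hc [H0 Hd]].
  apply le_line_of_upper_dini; [lra|exact Hc|apply subsolution_le_Y; auto|].
  intros s Hs Hon e He. destruct (Hd s ltac:(lra) e He) as [d [Hd0 Hdini]].
  exists d; split; [exact Hd0|]. intros j Hj. specialize (Hdini j Hj).
  pose proof (subsolution_lipschitz phi t s Hphi ltac:(lra)).
  pose proof (subsolution_le_Y phi t Hphi Ht).
  assert (H s (phi s) <= K) by (apply Hbox; [lra|apply Rabs_le; nra]).
  nra.
Qed.

Lemma Y_increment_ge t k K : w0 <= t -> 0 < k -> 0 <= K <= 1 ->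
  (forall s z, t <= s <= t + k -> Rabs (z - Y t) <= 2 * k -> K < H s z) ->
  Y t + K * k <= Y (t + k).
Proof.
  intros Ht Hk HK Hbox. apply Rle_plus_epsilon. intros eps Heps.
  set (eta := Rmin eps k).
  assert (Heta : 0 < eta) by (apply Rmin_glb_lt; lra).
  assert (eta <= eps) by apply Rmin_l. assert (eta <= k) by apply Rmin_r.
  destruct (Y_approx t eta Ht Heta) as [phi [Hphi Happrox]].
  pose proof (subsolution_le_Y phi t Hphi Ht).
  assert (Hglue : subsolution (glue phi t K k)).
  { apply subsolution_glue; [exact Hphi|exact Ht|exact Hk|]. intros s Hs.
    apply Hbox; [lra|]. apply Rabs_le. nra. }
  pose proof (subsolution_le_Y _ (t + k) Hglue ltac:(lra)) as Hend.
  rewrite glue_segment in Hend by lra. replace (t + k - t) with k in Hend by ring. lra.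
Qed.

Lemma Y_derivative t : w0 < t -> is_derive Y t (H t (Y t)).
Proof.
  intros Ht. apply is_derive_of_increments. intros ep Hep.
  set (c := H t (Y t)). assert (Hc : 0 < c <= 1) by (split; [apply H_pos|apply H_le_1]).
  set (ep' := Rmin ep c).
  assert (Hep' : 0 < ep') by (apply Rmin_glb_lt; lra).
  assert (ep' <= ep) by apply Rmin_l. assert (ep' <= c) by apply Rmin_r.
  destruct (H_cont t (Y t) (mkposreal ep' Hep')) as [rho Hrho]. simpl in Hrho.
  pose proof (cond_pos rho).
  exists (Rmin (rho / 4) (t - w0)). split; [apply Rmin_glb_lt; lra|].
  intros k [Hk0 Hk]. assert (k < rho / 4) by (eapply Rlt_le_trans; [exact Hk|apply Rmin_l]).
  assert (k < t - w0) by (eapply Rlt_le_trans; [exact Hk|apply Rmin_r]).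
  assert (Hbox : forall s z, t - k <= s <= t + k -> Rabs (z - Y t) <= 3 * k ->
                   c - ep' < H s z < c + ep').
  { intros s z Hs Hz.
    assert (Hd := Hrho s z ltac:(apply Rabs_lt_between; lra) ltac:(lra)).
    apply Rabs_lt_between in Hd. fold c in Hd. lra. }
  pose proof (Y_incr (t - k) t ltac:(lra)). pose proof (Y_lipschitz (t - k) t ltac:(lra)).
  assert (Hright_le : Y (t + k) <= Y t + (c + ep') * k).
  { apply Y_increment_le; [lra|lra|lra|]. intros s z Hs Hz.
    apply Rlt_le, Hbox; lra. }
  assert (Hright_ge : Y t + (c - ep') * k <= Y (t + k)).
  { apply Y_increment_ge; [lra|lra|lra|]. intros s z Hs Hz.
    apply Hbox; lra. }
  assert (Hleft_le : Y t <= Y (t - k) + (c + ep') * k).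
  { replace t with (t - k + k) at 1 by ring.
    apply Y_increment_le; [lra|lra|lra|]. intros s z Hs Hz.
    apply Rabs_le_between in Hz. apply Rlt_le, Hbox; [lra|apply Rabs_le_between; lra]. }
  assert (Hleft_ge : Y (t - k) + (c - ep') * k <= Y t).
  { replace t with (t - k + k) at 2 by ring.
    apply Y_increment_ge; [lra|lra|lra|]. intros s z Hs Hz.
    apply Rabs_le_between in Hz. apply Hbox; [lra|apply Rabs_le_between; lra]. }
  assert (ep' * k <= ep * k) by (apply Rmult_le_compat_r; lra).
  split; apply Rabs_le_between; split; lra.
Qed.

Lemma Y_strict_from_w0 p q : w0 <= p -> p < q -> Y p < Y q.
Proof.
  intros Hp Hpq. destruct (MVT_gen Y p q (fun u => H u (Y u))) as [c [Hc Hmvt]];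
    rewrite ?Rmin_left, ?Rmax_right in * by lra.
  - intros u Hu. apply Y_derivative. lra.
  - intros u _. apply Y_continuity.
  - specialize (H_pos c (Y c)). nra.
Qed.

End Perron.

(** * Outgoing null geodesics *)

Section Spacetime.

Variables (rc : R) (h : R -> R -> R) (hinf : R -> R) (xp : R -> R).
Hypothesis rc_pos : 0 < rc.
Hypothesis h_pos_cont : forall v x, -rc <= x -> 0 < h v x /\ continuity_2d_pt h v x.
Hypothesis xp_pos : forall v, 0 < xp v.
Hypothesis xp_derive : forall v : R, exists d : R, is_derive xp v d /\ d < 0.
Hypothesis hinf_pos_cont : forall x, -rc <= x -> 0 < hinf x /\ continuous hinf x.
Hypothesis h_unif : forall a b eps, 0 < eps -> exists V, forall v x,
  V < v -> a <= x <= b -> -rc <= x -> Rabs (h v x - hinf x) < eps.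

Lemma xp_continuity v : continuity_pt xp v.
Proof. destruct (xp_derive v) as [d [Hd _]]. exact (is_derive_continuity_pt _ _ _ Hd). Qed.

Lemma xp_decr p q : p <= q -> xp q <= xp p.
Proof.
  intros Hpq. enough (xp q - xp p <= 0 * (q - p)) by lra.
  apply (increment_le_of_derive_le xp (Derive xp)); [exact Hpq|]. intros u _.
  destruct (xp_derive u) as [d [Hd Hneg]]. rewrite (is_derive_unique xp u d Hd).
  split; [exact Hd|lra].
Qed.

Lemma h_eventually_ge lo hi : -rc <= lo <= hi ->
  exists m V, 0 < m /\ forall v x, V < v -> lo <= x <= hi -> m <= h v x.
Proof.
  intros Hlh. destruct (continuity_ab_min hinf lo hi) as [xm [Hmin Hxm]]; [lra| |].
  { intros x Hx. apply continuity_pt_filterlim, hinf_pos_cont. lra. }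
  assert (Hm : 0 < hinf xm) by (apply hinf_pos_cont; lra).
  destruct (h_unif lo hi (hinf xm / 2) ltac:(lra)) as [V HV].
  exists (hinf xm / 2), V. split; [lra|]. intros v x Hv Hx.
  specialize (HV v x Hv Hx ltac:(lra)). apply Rabs_lt_between in HV.
  specialize (Hmin x Hx). lra.
Qed.

Lemma inner_AH_geodesic : outgoing_geod h xp rc (fun _ => True) (fun _ => 0).
Proof.
  intros v _. split; [lra|]. unfold geod_rhs. rewrite Rminus_eq_0, Rmult_0_r.
  apply is_derive_Reals, derivable_pt_lim_const.
Qed.

Lemma geodesic_continuity (D : R -> Prop) x u :
  outgoing_geod h xp rc D x -> D u -> continuity_pt x u.
Proof. intros Hx Hu. exact (is_derive_continuity_pt _ _ _ (proj2 (Hx u Hu))). Qed.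

Lemma geodesic_linear_form (D : R -> Prop) x u : outgoing_geod h xp rc D x -> D u ->
  is_derive x u ((1/2 * h u (x u) * (x u - xp u)) * x u) /\
  continuity_pt (fun v => 1/2 * h v (x v) * (x v - xp v)) u.
Proof.
  intros Hx Hu. destruct (Hx u Hu) as [Hr Hd]. split.
  - unfold geod_rhs in Hd. rewrite Rminus_0_r in Hd. exact Hd.
  - assert (Hxc := is_derive_continuity_pt _ _ _ Hd).
    apply continuity_pt_mult; [apply continuity_pt_mult|apply continuity_pt_minus].
    + apply continuity_pt_const. intros ? ?; reflexivity.
    + apply (continuity_pt_comp_2d h (fun v => v) x); [apply h_pos_cont, Hr|reg|exact Hxc].
    + exact Hxc.
    + apply xp_continuity.
Qed.

Lemma geodesic_zero_everywhere (a : R) (b : Rbar) x :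
  outgoing_geod h xp rc (fun v => a < v /\ Rbar_lt v b) x ->
  forall v1, a < v1 -> Rbar_lt v1 b -> x v1 = 0 ->
  forall v, a < v -> Rbar_lt v b -> x v = 0.
Proof.
  intros Hx v1 Ha1 Hb1 H1 v Hav Hbv.
  set (g := fun v => 1/2 * h v (x v) * (x v - xp v)).
  destruct (Rle_dec v1 v) as [Hle|Hlt].
  - apply (linear_ode_zero_forward x g v1 v Hle); [|exact H1].
    intros u Hu. apply (geodesic_linear_form _ x u Hx), (Rbar_lt_between a b v1 v); auto.
  - apply (linear_ode_zero_backward x g v v1); [lra| |exact H1].
    intros u Hu. apply (geodesic_linear_form _ x u Hx), (Rbar_lt_between a b v v1); auto.
Qed.

Lemma geodesic_stays_negative (a : R) (b : Rbar) x :
  outgoing_geod h xp rc (fun v => a < v /\ Rbar_lt v b) x ->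
  forall v0, a < v0 -> Rbar_lt v0 b -> x v0 < 0 ->
  forall v, a < v -> Rbar_lt v b -> x v < 0.
Proof.
  intros Hx v0 Ha0 Hb0 H0 v Hav Hbv. apply Rnot_le_lt. intros Hge.
  assert (Hcont : forall p q : R, a < p -> Rbar_lt q b ->
            forall u, p <= u <= q -> continuity_pt x u)
    by (intros p q Hp Hq u Hu;
        exact (geodesic_continuity _ x u Hx (Rbar_lt_between a b p q u Hp Hq Hu))).
  assert (Hzero : exists z, a < z /\ Rbar_lt z b /\ x z = 0).
  { destruct (Rle_dec v0 v) as [Hle|Hlt].
    - destruct (IVT_interval x v0 v Hle (Hcont v0 v Ha0 Hbv) ltac:(nra)) as [z [Hz Hxz]].
      exists z. destruct (Rbar_lt_between a b v0 v z); auto.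
    - destruct (IVT_interval x v v0 ltac:(lra) (Hcont v v0 Hav Hb0) ltac:(nra)) as [z [Hz Hxz]].
      exists z. destruct (Rbar_lt_between a b v v0 z); auto. }
  destruct Hzero as [z [Haz [Hbz Hxz]]].
  pose proof (geodesic_zero_everywhere a b x Hx z Haz Hbz Hxz v0 Ha0 Hb0). lra.
Qed.

Lemma geod_rhs_pos_inside v x : -rc <= x < 0 -> 0 < geod_rhs h xp v x.
Proof.
  intros Hx. unfold geod_rhs. destruct (h_pos_cont v x ltac:(lra)) as [Hh _].
  specialize (xp_pos v). assert (0 < (x - xp v) * (x - 0)) by nra. nra.
Qed.

Lemma inside_geodesic_incr (a : R) x :
  outgoing_geod h xp rc (fun v => a < v) x -> (forall v, a < v -> x v < 0) ->
  forall p q, a < p -> p <= q -> x p <= x q.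
Proof.
  intros Hx Hneg p q Hp Hpq.
  enough (0 * (q - p) <= x q - x p) by lra.
  apply (increment_ge_of_derive_ge x (fun v => geod_rhs h xp v (x v))); [exact Hpq|].
  intros u Hu. destruct (Hx u ltac:(lra)) as [Hr Hd]. split; [exact Hd|].
  apply Rlt_le, geod_rhs_pos_inside. split; [exact Hr|apply Hneg; lra].
Qed.

Lemma inside_geodesic_eventually_above (a : R) x v0 :
  outgoing_geod h xp rc (fun v => a < v) x -> (forall v, a < v -> x v < 0) -> a < v0 ->
  forall ep, 0 < ep -> exists v, v0 <= v /\ - ep < x v.
Proof.
  intros Hx Hneg Hv0 ep Hep. apply NNPP. intros Hn.
  assert (Hbelow : forall v, v0 <= v -> x v <= - ep)
    by (intros v Hv; apply Rnot_lt_le; intros Hlt; apply Hn; eauto).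
  assert (Hrange : forall v, v0 <= v -> x v0 <= x v <= - ep)
    by (intros v Hv; split; [apply (inside_geodesic_incr a x Hx Hneg); lra|auto]).
  destruct (h_eventually_ge (x v0) (- ep)) as [m [V [Hm HmV]]].
  { split; [apply (Hx v0 Hv0)|apply Hbelow; lra]. }
  set (v1 := Rmax V v0 + 1).
  assert (V < v1 /\ v0 < v1)
    by (unfold v1; pose proof (Rmax_l V v0); pose proof (Rmax_r V v0); lra).
  assert (Hslope : forall u, v1 <= u ->
    is_derive x u (geod_rhs h xp u (x u)) /\ m / 2 * (ep * ep) <= geod_rhs h xp u (x u)).
  { intros u Hu. split; [apply (Hx u); lra|].
    destruct (Hrange u ltac:(lra)) as [Hlo Hhi].
    assert (Hh := HmV u (x u) ltac:(lra) (Hrange u ltac:(lra))).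
    specialize (xp_pos u).
    assert (ep * ep <= (x u - xp u) * (x u - 0)) by nra.
    unfold geod_rhs. nra. }
  assert (Hc : 0 < m / 2 * (ep * ep))
    by (apply Rmult_lt_0_compat; [lra|apply Rmult_lt_0_compat; lra]).
  destruct (unbounded_of_derive_ge x _ v1 _ Hc Hslope 0) as [u [Hu Hxu]].
  specialize (Hneg u ltac:(lra)). lra.
Qed.

Lemma inside_geodesic_tends_to_inner_AH (a : R) x :
  outgoing_geod h xp rc (fun v => a < v) x -> (exists v0, a < v0 /\ x v0 < 0) ->
  is_lim x p_infty 0.
Proof.
  intros Hx [v0 [Hv0 Hx0]].
  assert (Hneg : forall v, a < v -> x v < 0).
  { intros v Hv.
    apply (geodesic_stays_negative a p_infty x (fun u Hu => Hx u (proj1 Hu)) v0); easy. }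
  apply is_lim_spec. intros eps. simpl.
  destruct (inside_geodesic_eventually_above a x v0 Hx Hneg Hv0 eps (cond_pos eps))
    as [vs [Hvs Hxs]].
  exists vs. intros v Hv. rewrite Rminus_0_r.
  pose proof (inside_geodesic_incr a x Hx Hneg vs v ltac:(lra) ltac:(lra)).
  specialize (Hneg v ltac:(lra)). rewrite Rabs_left by lra. lra.
Qed.

Lemma trapped_inside v1 x1 : -rc <= x1 < 0 -> trapped_region h xp rc v1 x1.
Proof.
  intros Hx1. split; [lra|]. intros [b [x [Hb [_ [Hright [Hx Hinf]]]]]].
  assert (Hneg_near : locally x1 (fun y => y < 0)).
  { exists (mkposreal (- x1) ltac:(lra)). intros y Hy.
    change (Rabs (y - x1) < - x1) in Hy. apply Rabs_lt_between in Hy. lra. }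
  destruct (at_right_witness v1 b _ Hb (Hright _ Hneg_near)) as [u [Hu [Hub Hxu]]].
  destruct (at_left_witness b u x Hub Hinf) as [u' [Huu' [Hub' Hxu']]].
  pose proof (geodesic_stays_negative v1 b x Hx u Hu Hub Hxu u' ltac:(lra) Hub'). lra.
Qed.

(** * A geodesic escaping to infinity *)

Definition x_out : R := xp 0 + 1.

(* Along an outgoing geodesic outside the outer AH, w = v + x increases and
   v(w) solves dv/dw = 1 / (1 + geod_rhs v (w - v)).  The clamps make this
   slope field global, continuous and (0,1]-valued; they are inactive along
   the solution. *)
Definition slope (w v : R) : R :=
  / (1 + Rmax (geod_rhs h xp v (Rmax (w - v) x_out)) 0).

Lemma x_out_pos : 0 < x_out.
Proof. unfold x_out. specialize (xp_pos 0). lra. Qed.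

Lemma slope_pos w v : 0 < slope w v.
Proof.
  unfold slope. apply Rinv_0_lt_compat.
  pose proof (Rmax_r (geod_rhs h xp v (Rmax (w - v) x_out)) 0). lra.
Qed.

Lemma slope_le_1 w v : slope w v <= 1.
Proof.
  unfold slope. pose proof (Rmax_r (geod_rhs h xp v (Rmax (w - v) x_out)) 0).
  rewrite <- Rinv_1. apply Rinv_le_contravar; lra.
Qed.

Lemma slope_continuity w v : continuity_2d_pt slope w v.
Proof.
  assert (HX : continuity_2d_pt (fun w v => Rmax (w - v) x_out) w v).
  { apply (continuity_1d_2d_pt_comp (fun s => Rmax s x_out)); [apply continuity_pt_Rmax_r|].
    apply continuity_2d_pt_minus; [apply continuity_2d_pt_id1|apply continuity_2d_pt_id2]. }
  assert (HXr : -rc <= Rmax (w - v) x_out)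
    by (pose proof (Rmax_r (w - v) x_out); pose proof x_out_pos; lra).
  unfold slope. apply continuity_2d_pt_inv;
    [|pose proof (Rmax_r (geod_rhs h xp v (Rmax (w - v) x_out)) 0); lra].
  apply continuity_2d_pt_plus; [apply continuity_2d_pt_const|].
  apply (continuity_1d_2d_pt_comp (fun s => Rmax s 0)); [apply continuity_pt_Rmax_r|].
  unfold geod_rhs.
  repeat apply continuity_2d_pt_mult; try apply continuity_2d_pt_minus;
    try apply continuity_2d_pt_const; try exact HX.
  - apply (continuity_2d_pt_comp h (fun w v => v) (fun w v => Rmax (w - v) x_out));
      [apply h_pos_cont, HXr|apply continuity_2d_pt_id2|exact HX].
  - apply (continuity_1d_2d_pt_comp xp (fun w v => v));
      [apply xp_continuity|apply continuity_2d_pt_id2].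
Qed.

Definition vw : R -> R := Y slope x_out 0.
Definition xw (w : R) : R := w - vw w.
Definition Fw (w : R) : R := geod_rhs h xp (vw w) (xw w).

Lemma vw_start : vw x_out = 0.
Proof. exact (Y_w0 slope slope_pos slope_le_1 x_out 0). Qed.

Lemma vw_incr a b : a <= b -> vw a <= vw b.
Proof. exact (Y_incr slope slope_pos slope_le_1 x_out 0 a b). Qed.

Lemma vw_continuity w : continuity_pt vw w.
Proof. exact (Y_continuity slope slope_pos slope_le_1 x_out 0 w). Qed.

Lemma vw_strict p q : x_out <= p -> p < q -> vw p < vw q.
Proof. exact (Y_strict_from_w0 slope slope_pos slope_le_1 slope_continuity x_out 0 p q). Qed.

Lemma vw_nonneg w : x_out <= w -> 0 <= vw w.
Proof. intros Hw. rewrite <- vw_start. apply vw_incr, Hw. Qed.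

Lemma xw_incr a b : a <= b -> xw a <= xw b.
Proof.
  intros Hab. unfold xw.
  pose proof (Y_lipschitz slope slope_pos slope_le_1 x_out 0 a b Hab) as Hlip.
  fold vw in Hlip. lra.
Qed.

Lemma xw_ge w : x_out <= w -> x_out <= xw w.
Proof.
  intros Hw. replace x_out with (xw x_out) at 1 by (unfold xw; rewrite vw_start; ring).
  apply xw_incr, Hw.
Qed.

Lemma xw_minus_xp_ge w : x_out <= w -> 1 <= xw w - xp (vw w).
Proof.
  intros Hw. pose proof (xw_ge w Hw). pose proof (xp_decr 0 (vw w) (vw_nonneg w Hw)).
  unfold x_out in *. lra.
Qed.

Lemma Fw_pos w : x_out <= w -> 0 < Fw w.
Proof.
  intros Hw. unfold Fw, geod_rhs. pose proof (xw_ge w Hw). pose proof x_out_pos.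
  pose proof (xw_minus_xp_ge w Hw).
  assert (0 < h (vw w) (xw w)) by (apply h_pos_cont; lra).
  assert (0 < (xw w - xp (vw w)) * (xw w - 0)) by (apply Rmult_lt_0_compat; lra). nra.
Qed.

Lemma vw_derivative w : x_out < w -> is_derive vw w (/ (1 + Fw w)).
Proof.
  intros Hw. replace (/ (1 + Fw w)) with (slope w (vw w)).
  - exact (Y_derivative slope slope_pos slope_le_1 slope_continuity x_out 0 w Hw).
  - unfold slope, Fw. fold (xw w).
    rewrite (Rmax_left (xw w) x_out) by (apply xw_ge; lra).
    rewrite Rmax_left; [reflexivity|]. apply Rlt_le, (Fw_pos w). lra.
Qed.

Lemma xw_unbounded B : exists w, x_out <= w /\ B < xw w.
Proof.
  apply NNPP. intros Hn.
  assert (Hbelow : forall w, x_out <= w -> xw w <= B)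
    by (intros w Hw; apply Rnot_lt_le; intros Hlt; apply Hn; eauto).
  pose proof x_out_pos.
  assert (HB : x_out <= B)
    by (pose proof (xw_ge x_out (Rle_refl _)); pose proof (Hbelow x_out (Rle_refl _)); lra).
  destruct (h_eventually_ge x_out B ltac:(lra)) as [m [V [Hm HmV]]].
  set (c := m / 2 * x_out).
  assert (Hc : 0 < c) by (apply Rmult_lt_0_compat; lra).
  set (w1 := Rmax x_out (V + B) + 1).
  assert (x_out < w1 /\ V + B < w1)
    by (unfold w1; pose proof (Rmax_l x_out (V + B)); pose proof (Rmax_r x_out (V + B)); lra).
  assert (Hslope : forall w, w1 <= w ->
     is_derive xw w (1 - / (1 + Fw w)) /\ c / (1 + c) <= 1 - / (1 + Fw w)).
  { intros w Hw. split.
    - apply is_derive_Reals, (derivable_pt_lim_minus id vw w 1);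
        [apply derivable_pt_lim_id|apply is_derive_Reals, vw_derivative; lra].
    - assert (Hxw : x_out <= xw w <= B) by (split; [apply xw_ge|apply Hbelow]; lra).
      assert (Hh := HmV (vw w) (xw w) ltac:(unfold xw in Hxw; lra) Hxw).
      pose proof (xw_minus_xp_ge w ltac:(lra)).
      assert (HF : c <= Fw w).
      { unfold Fw, geod_rhs, c.
        assert (x_out <= (xw w - xp (vw w)) * (xw w - 0)) by nra. nra. }
      apply Rle_trans with (Fw w / (1 + Fw w)).
      + apply Rmult_le_reg_r with ((1 + c) * (1 + Fw w)); [nra|].
        field_simplify; [nra|lra|lra].
      + right. field. lra. }
  destruct (unbounded_of_derive_ge xw _ w1 (c / (1 + c))
              ltac:(apply Rdiv_lt_0_compat; lra) Hslope B)
    as [w [Hw Hxw]].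
  specialize (Hbelow w ltac:(lra)). lra.
Qed.

Definition v_end : Rbar := Lub_Rbar (fun v => exists w, x_out <= w /\ v = vw w).

Lemma vw_lt_v_end w : x_out <= w -> Rbar_lt (vw w) v_end.
Proof.
  intros Hw. destruct (Lub_Rbar_correct (fun v => exists w, x_out <= w /\ v = vw w)) as [Hub _].
  assert (Hle : Rbar_le (vw (w + 1)) v_end) by (apply Hub; exists (w + 1); split; [lra|auto]).
  pose proof (vw_strict w (w + 1) Hw ltac:(lra)).
  destruct v_end as [e| |]; simpl in *; [lra|exact I|contradiction].
Qed.

Lemma v_end_approx (v : R) : Rbar_lt v v_end -> exists w, x_out <= w /\ v < vw w.
Proof.
  intros Hv. apply NNPP. intros Hn.
  destruct (Lub_Rbar_correct (fun v => exists w, x_out <= w /\ v = vw w)) as [_ Hlub].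
  assert (Hle : Rbar_le v_end v).
  { apply Hlub. intros z [w [Hw ->]]. simpl. apply Rnot_lt_le. intros Hlt. apply Hn. eauto. }
  destruct v_end as [e| |]; simpl in *; [lra|contradiction|contradiction].
Qed.

Definition wv (v : R) : R := epsilon (inhabits 0) (fun w => x_out <= w /\ vw w = v).

Lemma wv_spec v : 0 <= v -> Rbar_lt v v_end -> x_out <= wv v /\ vw (wv v) = v.
Proof.
  intros Hv Hve. unfold wv. apply epsilon_spec.
  destruct (v_end_approx v Hve) as [w1 [Hw1 Hv1]].
  assert (Hcont : continuity (fun w => vw w - v))
    by (intros w; apply continuity_pt_minus;
        [apply vw_continuity|apply continuity_pt_const; intros ? ?; reflexivity]).
  destruct (IVT_cor _ x_out w1 Hcont Hw1) as [z [Hz Hvz]].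
  - rewrite vw_start. nra.
  - exists z. split; lra.
Qed.

Lemma wv_vw w : x_out <= w -> wv (vw w) = w.
Proof.
  intros Hw. destruct (wv_spec (vw w) (vw_nonneg w Hw) (vw_lt_v_end w Hw)) as [H1 H2].
  destruct (Rtotal_order (wv (vw w)) w) as [Hlt|[Heq|Hgt]]; [|exact Heq|].
  - pose proof (vw_strict _ _ H1 Hlt). lra.
  - pose proof (vw_strict _ _ Hw Hgt). lra.
Qed.

Definition x_escape (v : R) : R := wv v - v.

Lemma x_escape_eq v : 0 <= v -> Rbar_lt v v_end -> x_escape v = xw (wv v).
Proof.
  intros Hv Hve. unfold x_escape, xw. destruct (wv_spec v Hv Hve) as [_ ->]. reflexivity.
Qed.

Lemma x_escape_derivative v : 0 < v -> Rbar_lt v v_end ->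
  is_derive x_escape v (geod_rhs h xp v (x_escape v)).
Proof.
  intros Hv Hve. destruct (v_end_approx v Hve) as [w1 [Hw1 Hv1]].
  set (ub := (v + vw w1) / 2).
  assert (Hub : Rbar_lt ub v_end)
    by (apply (Rbar_le_lt_trans _ (vw w1)); [simpl; unfold ub; lra|apply vw_lt_v_end, Hw1]).
  destruct (wv_spec v ltac:(lra) Hve) as [Hwv Hvwv].
  assert (Hinv : is_derive wv v (/ / (1 + Fw (wv v)))).
  { apply (is_derive_inverse vw wv (fun w => / (1 + Fw w)) x_out (v / 2) ub v).
    - unfold ub. lra.
    - rewrite vw_start. lra.
    - intros p q Hp Hpq. apply vw_strict; assumption.
    - intros w Hw. apply vw_derivative, Hw.
    - intros u Hu. apply wv_spec; [lra|].
      apply (Rbar_le_lt_trans _ ub); [simpl; lra|exact Hub].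
    - apply Rinv_neq_0_compat. pose proof (Fw_pos (wv v) Hwv). lra. }
  rewrite Rinv_inv in Hinv.
  replace (geod_rhs h xp v (x_escape v)) with (1 + Fw (wv v) - 1).
  - apply is_derive_Reals, (derivable_pt_lim_minus wv id v);
      [apply is_derive_Reals, Hinv|apply derivable_pt_lim_id].
  - unfold Fw. rewrite Hvwv, <- (x_escape_eq v ltac:(lra) Hve). ring.
Qed.

Lemma x_escape_right_limit : filterlim x_escape (at_right 0) (locally x_out).
Proof.
  pose proof x_out_pos. apply filterlim_locally. intros eps.
  set (e := eps / 2). assert (He : 0 < e) by (unfold e; pose proof (cond_pos eps); lra).
  assert (Hpos : 0 < vw (x_out + e)) by (rewrite <- vw_start; apply vw_strict; lra).
  set (d := Rmin (vw (x_out + e)) e).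
  assert (Hd : 0 < d) by (apply Rmin_glb_lt; lra).
  assert (d <= vw (x_out + e)) by apply Rmin_l. assert (d <= e) by apply Rmin_r.
  exists (mkposreal d Hd). intros u Hu Hu0.
  change (Rabs (u - 0) < d) in Hu. rewrite Rminus_0_r, Rabs_pos_eq in Hu by lra.
  assert (Hue : Rbar_lt u v_end).
  { apply (Rbar_le_lt_trans _ (vw (x_out + e))); [simpl; lra|apply vw_lt_v_end; lra]. }
  destruct (wv_spec u ltac:(lra) Hue) as [Hw1 Hw2].
  assert (wv u < x_out + e).
  { apply Rnot_le_lt. intros Hge. pose proof (vw_incr _ _ Hge). lra. }
  change (Rabs (x_escape u - x_out) < eps). unfold x_escape.
  apply Rabs_lt_between. unfold e in *. lra.
Qed.

Lemma escape_reaches_infinity : reaches_infinity h xp rc 0 x_out.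
Proof.
  pose proof x_out_pos.
  assert (Hstart : Rbar_lt 0 v_end) by (rewrite <- vw_start; apply vw_lt_v_end; lra).
  assert (Hwv0 : wv 0 = x_out) by (rewrite <- vw_start at 1; apply wv_vw; lra).
  exists v_end, x_escape. split; [exact Hstart|]. split; [unfold x_escape; rewrite Hwv0; ring|].
  split; [exact x_escape_right_limit|]. split.
  - intros v [Hv Hve]. split; [|apply x_escape_derivative; assumption].
    destruct (wv_spec v ltac:(lra) Hve) as [Hw _].
    rewrite (x_escape_eq v ltac:(lra) Hve). pose proof (xw_ge (wv v) Hw). lra.
  - apply filterlim_at_left_pinfty. intros M.
    destruct (xw_unbounded M) as [wM [HwM HxM]].
    exists (vw wM). split; [apply vw_lt_v_end, HwM|]. intros v Hv Hve.
    pose proof (vw_nonneg wM HwM).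
    destruct (wv_spec v ltac:(lra) Hve) as [Hw1 Hw2].
    assert (HwMv : wM <= wv v)
      by (apply Rnot_lt_le; intros Hlt; pose proof (vw_incr _ _ (Rlt_le _ _ Hlt)); lra).
    rewrite (x_escape_eq v ltac:(lra) Hve). pose proof (xw_incr _ _ HwMv). lra.
Qed.

Lemma event_horizon_exists : exists v0 x0, event_horizon h xp rc v0 x0.
Proof.
  destruct (sup_is_boundary (trapped_region h xp rc 0) (- rc) x_out) as [s [Hs Hbd]].
  - pose proof x_out_pos. lra.
  - apply trapped_inside. lra.
  - intros [_ Hn]. exact (Hn escape_reaches_infinity).
  - exists 0, s. split; [lra|]. intros eps Heps.
    destruct (Hbd eps Heps) as [[x1 [H1 [Hr1 Ht1]]] [x2 [H2 [Hr2 Ht2]]]].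
    split.
    + exists 0, x1. rewrite Rminus_eq_0, Rabs_R0. auto.
    + exists 0, x2. rewrite Rminus_eq_0, Rabs_R0. repeat split; auto; lra.
Qed.

End Spacetime.

Theorem lemma3
  (rc : R) (h : R -> R -> R) (hinf : R -> R) (xp : R -> R) :
  0 < rc ->
  (* h = A F > 0 and continuous on the spacetime region r >= 0 *)
  (forall v x, -rc <= x -> 0 < h v x /\ continuity_2d_pt h v x) ->
  (* outer AH: x_+ > x_- = 0, strictly decreasing, x_+ -> 0 *)
  (forall v, 0 < xp v) ->
  (forall v, exists d, is_derive xp v d /\ d < 0) ->
  is_lim xp p_infty 0 ->
  (* v -> oo limit of h: continuous positive, locally uniform convergence *)
  (forall x, -rc <= x -> 0 < hinf x /\ continuous hinf x) ->
  (forall a b eps, 0 < eps -> exists V, forall v x,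
      V < v -> a <= x <= b -> -rc <= x -> Rabs (h v x - hinf x) < eps) ->
  (* the inner AH x = 0 is an outgoing null geodesic *)
  outgoing_geod h xp rc (fun _ => True) (fun _ => 0) /\
  (* other outgoing null geodesics never meet the inner AH *)
  (forall (a : R) (b : Rbar) (x : R -> R),
      outgoing_geod h xp rc (fun v => a < v /\ Rbar_lt v b) x ->
      (exists v1, a < v1 /\ Rbar_lt v1 b /\ x v1 = 0) ->
      forall v, a < v -> Rbar_lt v b -> x v = 0) /\
  (* outgoing null geodesics inside the inner AH tend to it *)
  (forall (a : R) (x : R -> R),
      outgoing_geod h xp rc (fun v => a < v) x ->
      (exists v0, a < v0 /\ x v0 < 0) ->
      is_lim x p_infty 0) /\
  (* an event horizon exists *)
  (exists v0 x0, event_horizon h xp rc v0 x0).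
Proof.
  intros Hrc Hh Hxp Hxpd _ Hhinf Hunif.
  split; [|split; [|split]].
  - exact (inner_AH_geodesic rc h xp Hrc).
  - intros a b x Hx [v1 [Ha1 [Hb1 Hx1]]].
    exact (geodesic_zero_everywhere rc h xp Hh Hxpd a b x Hx v1 Ha1 Hb1 Hx1).
  - exact (inside_geodesic_tends_to_inner_AH rc h hinf xp Hh Hxp Hxpd Hhinf Hunif).
  - exact (event_horizon_exists rc h hinf xp Hrc Hh Hxp Hxpd Hhinf Hunif).
Qed.
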